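(* Let $R$ be a right coherent ring and $M\in R\text{-}\mathbf{Mod}$. Then (1) $\ker(\mathrm{Covdefect})\subseteq\ker(\mathrm{ev}_M)$ if and only if $M$ is flat; (2) $\ker(\mathrm{Covdefect})=\ker(\mathrm{ev}_M)$ if and only if $M$ is fp-faithfully flat.
   Context: $R$ is right coherent if every finitely generated right ideal is finitely presented; then $\mathbf{mod}\text{-}R$ (finitely presented right modules) is abelian. $R\text{-}\mathbf{mod}\text{-}\mathbf{mod}$ is the abelian category of finitely presented additive functors from finitely presented left $R$-modules to $\mathbf{Ab}$ (cokernels of $\operatorname{Hom}(\alpha,-)$), each identified with its extension to all left modules commuting with filtered colimits; $\mathrm{ev}_M(\mathcal G)=\mathcal G(M)$ and $\ker(\mathrm{ev}_M)=\{\mathcal G\mid\mathcal G(M)=0\}$. Every $\mathcal G\in R\text{-}\mathbf{mod}\text{-}\mathbf{mod}$ admits a copresentation, an exact sequence $0\to\mathcal G\to(N\otimes_R-)\xrightarrow{\alpha\otimes-}(N'\otimes_R-)$ with $\alpha:N\to N'$ in $\mathbf{mod}\text{-}R$; the covariant defect is $\mathrm{Covdefect}(\mathcal G):=\ker(\alpha)\cong\mathcal G({}_RR)$ (right module structure: $r$ acts by $\mathcal G$ applied to right multiplication by $r$ on ${}_RR$), and $\ker(\mathrm{Covdefect})$ consists of the $\mathcal G$ with zero covariant defect. $M$ is flat if $-\otimes_RM$ is exact on right modules, and fp-faithfully flat if it is flat and $-\otimes_RM:\mathbf{mod}\text{-}R\to\mathbf{Ab}$ is faithful. *)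

From HB Require Import structures.
From mathcomp Require Import all_boot all_order all_algebra.
From mathcomp Require Import freeg.
Set Implicit Arguments. Unset Strict Implicit. Unset Printing Implicit Defensive.
Import GRing.Theory.
Local Open Scope ring_scope.

(* Right R-modules   = lmodType R^c  (R^c = converse ring); for x : X and
   r : R, the right action x.r is written  (r : R^c) *: x.
   R viewed as a left module over itself is the regular module R^o. *)

Definition fin_pres (S : pzRingType) (V : lmodType S) : Prop :=
  exists (n : nat) (v : 'I_n -> V),
    (forall x : V, exists c : 'I_n -> S, x = \sum_(i < n) c i *: v i) /\
    exists (m : nat) (w : 'I_m -> 'I_n -> S),
      (forall j, \sum_(i < n) w j i *: v i = 0) /\
      (forall c : 'I_n -> S, \sum_(i < n) c i *: v i = 0 ->
         exists d : 'I_m -> S, forall i, c i = \sum_(j < m) d j * w j i).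

Definition in_right_ideal (R : pzRingType) (n : nat) (a : 'I_n -> R) (x : R) :=
  exists c : 'I_n -> R, x = \sum_(i < n) a i * c i.

Definition fp_right_ideal (R : pzRingType) (n : nat) (a : 'I_n -> R) : Prop :=
  exists (n' : nat) (b : 'I_n' -> R),
    (forall x, in_right_ideal a x <-> in_right_ideal b x) /\
    exists (m : nat) (w : 'I_m -> 'I_n' -> R),
      (forall j, \sum_(i < n') b i * w j i = 0) /\
      (forall c : 'I_n' -> R, \sum_(i < n') b i * c i = 0 ->
         exists d : 'I_m -> R, forall i, c i = \sum_(j < m) w j i * d j).

Definition right_coherent (R : pzRingType) : Prop :=
  forall (n : nat) (a : 'I_n -> R), fp_right_ideal a.

(* Tensor product X (x)_R M of a right module X and a left module M,
   presented as the free abelian group on X * M modulo the subgroup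
   generated by the bilinearity / balancing relations.  An element of
   X (x)_R M is represented by a formal sum s = [:: (x_1,m_1); ...]
   standing for  \sum_k x_k (x) m_k  (every element is of this form, since
   -(x (x) m) = (-x) (x) m). *)
Section Tensor.
Variables (R : pzRingType) (X : lmodType R^c) (M : lmodType R).

Definition tgen (p : X * M) : {freeg (X * M) / int} := << p >>.

Inductive trel : {freeg (X * M) / int} -> Prop :=
  | trel0 : trel 0
  | trelB z1 z2 : trel z1 -> trel z2 -> trel (z1 - z2)
  | trel_addl x x' m :
      trel (tgen (x + x', m) - tgen (x, m) - tgen (x', m))
  | trel_addr x m m' :
      trel (tgen (x, m + m') - tgen (x, m) - tgen (x, m'))
  | trel_bal (r : R) x m :
      trel (tgen ((r : R^c) *: x, m) - tgen (x, r *: m)).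

Definition tsum (s : seq (X * M)) : {freeg (X * M) / int} :=
  \sum_(p <- s) tgen p.

Definition teq (s1 s2 : seq (X * M)) : Prop := trel (tsum s1 - tsum s2).
End Tensor.

Definition tmap (R : pzRingType) (X Y : lmodType R^c) (M : lmodType R)
  (f : X -> Y) (s : seq (X * M)) : seq (Y * M) :=
  [seq (f p.1, p.2) | p <- s].

Definition flat (R : pzRingType) (M : lmodType R) : Prop :=
  forall (X Y Z : lmodType R^c) (f : {linear X -> Y}) (g : {linear Y -> Z}),
    (forall y : Y, g y = 0 <-> exists x : X, f x = y) ->
    forall s : seq (Y * M),
      teq (tmap g s) [::] <-> exists t : seq (X * M), teq (tmap f t) s.

Definition fp_faithful (R : pzRingType) (M : lmodType R) : Prop :=
  forall (N N' : lmodType R^c), fin_pres N -> fin_pres N' ->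
  forall f g : {linear N -> N'},
    (forall s : seq (N * M), teq (tmap f s) (tmap g s)) ->
    forall n : N, f n = g n.

Definition fp_faithfully_flat (R : pzRingType) (M : lmodType R) : Prop :=
  flat M /\ fp_faithful M.

(* Objects of R-mod-mod: G = Coker Hom(alpha, -) for a morphism
   alpha : A -> B of finitely presented left R-modules.  Its (filtered-
   colimit preserving) extension to an arbitrary left module L is
   G(L) = Coker (Hom(B,L) -> Hom(A,L)), since Hom(A,-), Hom(B,-) commute
   with filtered colimits for A, B finitely presented. *)
Record fpfunctor (R : pzRingType) := FPFunctor {
  fpf_dom : lmodType R;
  fpf_cod : lmodType R;
  fpf_dom_fp : fin_pres fpf_dom;
  fpf_cod_fp : fin_pres fpf_cod;
  fpf_map : {linear fpf_dom -> fpf_cod}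
}.

(* G(L) = 0, i.e. G lies in ker(ev_L): Hom(alpha, L) is surjective. *)
Definition ev_zero (R : pzRingType) (G : fpfunctor R) (L : lmodType R) : Prop :=
  forall g : {linear fpf_dom G -> L},
    exists h : {linear fpf_cod G -> L},
      forall a, g a = h (fpf_map G a).

(* Covdefect(G) = 0; Covdefect(G) is isomorphic to G(_R R). *)
Definition covdefect_zero (R : pzRingType) (G : fpfunctor R) : Prop :=
  ev_zero G R^o.

From HB Require Import structures.
From mathcomp Require Import all_boot all_order all_algebra.
From mathcomp Require Import freeg.
From Stdlib Require Import ClassicalEpsilon.
Set Implicit Arguments. Unset Strict Implicit. Unset Printing Implicit Defensive.
Import GRing.Theory.
Local Open Scope ring_scope.

(* Over a right coherent ring every finite homogeneous system w c = 0 has a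
   finitely generated module of solutions.  This turns flatness of M into the
   equational criterion: every relation w mu = 0 in M reads mu = x nu for
   some solutions x of w x = 0 in R.
   A relation w mu = 0 in M is a map to M from A = R^n / (rows of w); with x
   generating the solutions, the functor G = Coker Hom(A --x--> R^K, -) has
   zero covariant defect, and G(M) = 0 says exactly that mu = x nu.
   Conversely, under the criterion every map A -> M is a combination of maps
   A -> R, which factor through al when the covariant defect of
   Coker Hom(al, -) vanishes.  This gives (1).
   For (2), the covariant defect of G = Coker Hom(al, -) is the finitely
   presented right module Hom(A, R) / al^* Hom(B, R).  If M is flat and
   G(M) = 0, the equational criterion shows that its tensor product with M
   vanishes, so fp-faithfulness kills it.  Conversely, if f (x) M = g (x) M
   then y = f n - g n satisfies y (x) M = 0; the functor attached to the right
   annihilator of y then vanishes at M, hence has zero covariant defect, which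
   forces y = 0. *)

(** * Tensor products *)

Section TensorCongruence.
Variables (R : pzRingType) (X : lmodType R^c) (M : lmodType R).
Local Notation F := {freeg (X * M) / int}.
Implicit Types (u v : F) (x : X) (m : M) (p : X * M) (s : seq (X * M)).

Definition teqv u v := trel (u - v).

Lemma trelN u : trel u -> trel (- u).
Proof. by move=> h; rewrite -sub0r; apply: trelB => //; apply: trel0. Qed.

Lemma trelD u v : trel u -> trel v -> trel (u + v).
Proof. by move=> hu hv; rewrite -[v]opprK; apply: trelB => //; apply: trelN. Qed.

Lemma trel_sum (I : Type) (r : seq I) (P : pred I) (f : I -> F) :
  (forall i, P i -> trel (f i)) -> trel (\sum_(i <- r | P i) f i).
Proof.
move=> h; elim: r => [|i r IH]; first by rewrite big_nil; apply: trel0.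
by rewrite big_cons; case: ifP => // Pi; apply: trelD => //; apply: h.
Qed.

Lemma teqv_refl u : teqv u u.
Proof. by rewrite /teqv subrr; apply: trel0. Qed.

Lemma eq_teqv u v : u = v -> teqv u v.
Proof. by move=> ->; apply: teqv_refl. Qed.

Lemma teqv_sym u v : teqv u v -> teqv v u.
Proof. by move=> h; rewrite /teqv -opprB; apply: trelN. Qed.

Lemma teqv_trans v u w : teqv u v -> teqv v w -> teqv u w.
Proof. by rewrite /teqv => h1 h2; have := trelD h1 h2; rewrite addrA subrK. Qed.

Lemma teqv0 u : teqv u 0 <-> trel u.
Proof. by rewrite /teqv subr0. Qed.

Lemma trel_teqv u v : teqv u v -> trel v -> trel u.
Proof. by move=> h hv; have := trelD h hv; rewrite subrK. Qed.

Lemma teqvD u1 u2 v1 v2 : teqv u1 v1 -> teqv u2 v2 -> teqv (u1 + u2) (v1 + v2).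
Proof. by rewrite /teqv => h1 h2; have := trelD h1 h2; rewrite opprD addrACA. Qed.

Lemma teqv_sum (I : Type) (r : seq I) (P : pred I) (f g : I -> F) :
  (forall i, P i -> teqv (f i) (g i)) ->
  teqv (\sum_(i <- r | P i) f i) (\sum_(i <- r | P i) g i).
Proof.
move=> h; elim: r => [|i r IH]; first by rewrite !big_nil; apply: teqv_refl.
by rewrite !big_cons; case: ifP => Pi //; apply: teqvD (h i Pi) IH.
Qed.

Lemma teqv_sum0 (I : Type) (r : seq I) (P : pred I) (f : I -> F) :
  (forall i, P i -> teqv (f i) 0) -> teqv (\sum_(i <- r | P i) f i) 0.
Proof.
move=> h; have := @teqv_sum I r P f (fun=> 0) h.
by rewrite [X in teqv _ X]big1.
Qed.

Lemma tgenDl x x' m : teqv (tgen (x + x', m)) (tgen (x, m) + tgen (x', m)).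
Proof. by rewrite /teqv opprD addrA; apply: trel_addl. Qed.

Lemma tgenDr x m m' : teqv (tgen (x, m + m')) (tgen (x, m) + tgen (x, m')).
Proof. by rewrite /teqv opprD addrA; apply: trel_addr. Qed.

Lemma tgen_bal (r : R) x m : teqv (tgen ((r : R^c) *: x, m)) (tgen (x, r *: m)).
Proof. exact: trel_bal. Qed.

Lemma tgen0l m : teqv (tgen (0, m)) 0.
Proof.
by have := trelN (tgenDl 0 0 m); rewrite addr0 opprB addrK => h; apply/teqv0.
Qed.

Lemma tgen0r x : teqv (tgen (x, 0)) 0.
Proof.
by have := trelN (tgenDr x 0 0); rewrite addr0 opprB addrK => h; apply/teqv0.
Qed.

Lemma tgenNl x m : teqv (tgen (- x, m)) (- tgen (x, m)).
Proof.
have := trelD (trelN (tgenDl (- x) x m)) (tgen0l m).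
by rewrite addNr opprB subr0 subrK /teqv opprK.
Qed.

Lemma tgenBl x x' m : teqv (tgen (x - x', m)) (tgen (x, m) - tgen (x', m)).
Proof. exact: teqv_trans (tgenDl _ _ _) (teqvD (teqv_refl _) (tgenNl _ _)). Qed.

Lemma tgen_suml (I : Type) (r : seq I) (f : I -> X) m :
  teqv (tgen (\sum_(i <- r) f i, m)) (\sum_(i <- r) tgen (f i, m)).
Proof.
elim: r => [|i r IH]; first by rewrite !big_nil; apply: tgen0l.
by rewrite !big_cons; apply: teqv_trans (tgenDl _ _ _) (teqvD (teqv_refl _) IH).
Qed.

Lemma tgen_sumr (I : Type) (r : seq I) (f : I -> M) x :
  teqv (tgen (x, \sum_(i <- r) f i)) (\sum_(i <- r) tgen (x, f i)).
Proof.
elim: r => [|i r IH]; first by rewrite !big_nil; apply: tgen0r.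
by rewrite !big_cons; apply: teqv_trans (tgenDr _ _ _) (teqvD (teqv_refl _) IH).
Qed.

Lemma tgen_sum_balance (I J : Type) (rI : seq I) (rJ : seq J) (e : I -> X)
    (a : I -> J -> R) (nu : J -> M) :
  teqv (\sum_(i <- rI) tgen (e i, \sum_(j <- rJ) a i j *: nu j))
       (\sum_(j <- rJ) tgen (\sum_(i <- rI) (a i j : R^c) *: e i, nu j)).
Proof.
apply: (@teqv_trans (\sum_(i <- rI) \sum_(j <- rJ) tgen (e i, a i j *: nu j))).
  by apply: teqv_sum => i _; apply: tgen_sumr.
rewrite exchange_big /=; apply: teqv_sum => j _; apply: teqv_sym.
apply: teqv_trans (tgen_suml _ _ _) _.
by apply: teqv_sum => i _; apply: tgen_bal.
Qed.

Lemma tsum_cons p s : tsum (p :: s) = tgen p + tsum s.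
Proof. exact: big_cons. Qed.

Lemma tsum_nil : tsum [::] = 0 :> F.
Proof. exact: big_nil. Qed.

Lemma teq_nil s : teq s [::] <-> trel (tsum s).
Proof. by rewrite /teq tsum_nil subr0. Qed.
End TensorCongruence.

Definition tlift (R : pzRingType) (X : lmodType R^c) (M : lmodType R)
    (V : zmodType) (f : X * M -> V) (u : {freeg (X * M) / int}) : V :=
  @fglift int (zmodule V) (X * M)%type f u.

HB.instance Definition _ (R : pzRingType) (X : lmodType R^c) (M : lmodType R)
    (V : zmodType) (f : X * M -> V) :=
  GRing.isAdditive.Build _ V (tlift f)
    (@lift_is_additive int (X * M)%type (zmodule V) f).

Section Lift.
Variables (R : pzRingType) (X : lmodType R^c) (M : lmodType R).
Variables (V : zmodType) (f : X * M -> V).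
Implicit Types (x : X) (m : M).

Lemma tliftU (p : X * M) : tlift f (tgen p) = f p.
Proof. by rewrite /tlift /tgen liftU /= scalezrE mulr1z. Qed.

Lemma tlift_tsum (s : seq (X * M)) : tlift f (tsum s) = \sum_(p <- s) f p.
Proof. by rewrite /tsum raddf_sum /=; apply: eq_bigr => p _; rewrite tliftU. Qed.

Hypothesis fDl : forall x x' m, f (x + x', m) = f (x, m) + f (x', m).
Hypothesis fDr : forall x m m', f (x, m + m') = f (x, m) + f (x, m').
Hypothesis fbal : forall (r : R) x m, f ((r : R^c) *: x, m) = f (x, r *: m).

Lemma tlift_trel u : trel u -> tlift f u = 0.
Proof.
elim=> [|z1 z2 _ h1 _ h2|x x' m|x m m'|r x m]; first exact: raddf0.
- by rewrite raddfB /= h1 h2 subrr.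
- by rewrite !raddfB /= !tliftU fDl -addrA -opprD subrr.
- by rewrite !raddfB /= !tliftU fDr -addrA -opprD subrr.
- by rewrite !raddfB /= !tliftU fbal subrr.
Qed.

Lemma tlift_teq (s1 s2 : seq (X * M)) :
  teq s1 s2 -> \sum_(p <- s1) f p = \sum_(p <- s2) f p.
Proof. by move/tlift_trel/eqP; rewrite raddfB /= !tlift_tsum subr_eq0 => /eqP. Qed.
End Lift.

Section TensorMap.
Variables (R : pzRingType) (X Y : lmodType R^c) (M : lmodType R).
Variable h : {linear X -> Y}.

Lemma trel_tmap (u : {freeg (X * M) / int}) :
  trel u -> trel (tlift (fun p => tgen (h p.1, p.2)) u).
Proof.
elim=> [|z1 z2 _ h1 _ h2|x x' m|x m m'|r x m].
- by rewrite raddf0; apply: trel0.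
- by rewrite raddfB; apply: trelB.
- by rewrite !raddfB /= !tliftU /= linearD; apply: trel_addl.
- by rewrite !raddfB /= !tliftU /=; apply: trel_addr.
- by rewrite !raddfB /= !tliftU /= linearZ; apply: trel_bal.
Qed.

Lemma teq_tmap (s1 s2 : seq (X * M)) : teq s1 s2 -> teq (tmap h s1) (tmap h s2).
Proof.
move/trel_tmap; rewrite raddfB /= !tlift_tsum /teq /tsum /tmap !big_map.
by congr (trel (_ - _)); apply: eq_bigr.
Qed.
End TensorMap.

(** * Right coherence *)

Lemma split_lshift m n (i : 'I_m) : split (lshift n i) = inl i.
Proof. exact: (unsplitK (inl i)). Qed.

Lemma split_rshift m n (i : 'I_n) : split (rshift m i) = inr i.
Proof. exact: (unsplitK (inr i)). Qed.

Section Kronecker.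
Variables (R : pzRingType) (n : nat) (k : 'I_n).

Lemma sum_delta_mull (f : 'I_n -> R) : \sum_i (i == k)%:R * f i = f k.
Proof.
rewrite (bigD1 k) //= eqxx mul1r big1 ?addr0 // => i /negPf ->; exact: mul0r.
Qed.

Lemma sum_delta_mulr (f : 'I_n -> R) : \sum_i f i * (i == k)%:R = f k.
Proof.
rewrite (bigD1 k) //= eqxx mulr1 big1 ?addr0 // => i /negPf ->; exact: mulr0.
Qed.

Lemma sum_deltaZ (V : lmodType R) (f : 'I_n -> V) : \sum_i (i == k)%:R *: f i = f k.
Proof.
rewrite (bigD1 k) //= eqxx scale1r big1 ?addr0 // => i /negPf ->; exact: scale0r.
Qed.
End Kronecker.

Section RightKernel.
Variable R : pzRingType.

Definition rker (m n : nat) (w : 'I_m -> 'I_n -> R) (c : 'I_n -> R) :=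
  forall j, \sum_i w j i * c i = 0.

Definition fg_rker (m n : nat) (w : 'I_m -> 'I_n -> R) :=
  exists (K : nat) (x : 'I_K -> 'I_n -> R), (forall k, rker w (x k)) /\
    forall c, rker w c -> exists d : 'I_K -> R, forall i, c i = \sum_k x k i * d k.

Lemma fg_rker0 n (w : 'I_0 -> 'I_n -> R) : fg_rker w.
Proof.
exists n, (fun k i => (k == i)%:R); split=> [k [] //|c _].
by exists c => i; rewrite sum_delta_mull.
Qed.

(* The solutions of the row [a] are spanned by the [q w'_j] and by the
   columns of 1 - q p. *)
Lemma fg_rker_row_transfer n n' (a : 'I_n -> R) (b : 'I_n' -> R)
    (p : 'I_n' -> 'I_n -> R) (q : 'I_n -> 'I_n' -> R) :
  (forall i, a i = \sum_i' b i' * p i' i) ->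
  (forall i', b i' = \sum_i a i * q i i') ->
  fg_rker (fun _ : 'I_1 => b) -> fg_rker (fun _ : 'I_1 => a).
Proof.
move=> ab ba [m' [w' [w'_ker w'_gen]]].
pose x (k : 'I_(m' + n)) i : R := match split k with
  | inl j => \sum_i' q i i' * w' j i'
  | inr i0 => (i == i0)%:R - \sum_i' q i i' * p i' i0 end.
exists (m' + n)%N, x; split.
- move=> k _; rewrite /x; case: split => [j|i0].
  + under eq_bigr do rewrite mulr_sumr.
    rewrite exchange_big /= -[RHS](w'_ker j ord0); apply: eq_bigr => i' _.
    by rewrite ba mulr_suml; apply: eq_bigr => i _; rewrite mulrA.
  + under eq_bigr do rewrite mulrBr mulr_sumr.
    rewrite sumrB sum_delta_mulr exchange_big /= ab; apply/eqP; rewrite subr_eq0.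
    apply/eqP/eq_bigr => i' _; rewrite ba !mulr_suml; apply: eq_bigr => i _.
    by rewrite mulrA.
- move=> c /(_ ord0) c_ker.
  have pc_ker : rker (fun _ : 'I_1 => b) (fun i' => \sum_i p i' i * c i).
    move=> _; rewrite -[RHS]c_ker; under eq_bigr do rewrite mulr_sumr.
    rewrite exchange_big /=; apply: eq_bigr => i _.
    by rewrite ab mulr_suml; apply: eq_bigr => i' _; rewrite mulrA.
  have [d cd] := w'_gen _ pc_ker.
  exists (fun k => match split k with inl j => d j | inr i0 => c i0 end) => i.
  rewrite big_split_ord /= /x.
  under eq_bigr do rewrite split_lshift mulr_suml.
  under [X in _ = _ + X]eq_bigr do rewrite split_rshift mulrBl.
  rewrite sumrB; under [X in _ + (X - _)]eq_bigr do rewrite eq_sym.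
  rewrite sum_delta_mull addrCA exchange_big /=.
  have -> : \sum_i' \sum_j q i i' * w' j i' * d j
          = \sum_i0 (\sum_i' q i i' * p i' i0) * c i0.
    under [RHS]eq_bigr do rewrite mulr_suml.
    rewrite [RHS]exchange_big /=; apply: eq_bigr => i' _.
    under [RHS]eq_bigr do rewrite -mulrA.
    rewrite -mulr_sumr cd mulr_sumr.
    by apply: eq_bigr => j _; rewrite mulrA.
  by rewrite subrr addr0.
Qed.

Lemma in_right_ideal_gen n (a : 'I_n -> R) i : in_right_ideal a (a i).
Proof. by exists (fun i0 => (i0 == i)%:R); rewrite sum_delta_mulr. Qed.

Lemma coherent_fg_rker_row (hR : right_coherent R) n (a : 'I_n -> R) :
  fg_rker (fun _ : 'I_1 => a).
Proof.
have [n' [b [ab [m' [w' [w'_ker w'_gen]]]]]] := hR n a.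
have [p ap] : exists p : 'I_n' -> 'I_n -> R, forall i, a i = \sum_i' b i' * p i' i.
  have [f hf] := fin_all_exists (fun i => (ab (a i)).1 (in_right_ideal_gen a i)).
  by exists (fun i' i => f i i'); apply: hf.
have [q bq] : exists q : 'I_n -> 'I_n' -> R, forall i', b i' = \sum_i a i * q i i'.
  have [f hf] := fin_all_exists (fun i' => (ab (b i')).2 (in_right_ideal_gen b i')).
  by exists (fun i i' => f i' i); apply: hf.
apply: fg_rker_row_transfer ap bq _.
by exists m', w'; split=> [j _|c /(_ ord0)]; [apply: w'_ker | apply: w'_gen].
Qed.

(* A solution of the first m rows is [u d]; it also solves the last row [r]
   iff [d] solves the single row [r u]. *)
Lemma fg_rker_addrow m n (w : 'I_m.+1 -> 'I_n -> R) :
  (forall K (a : 'I_K -> R), fg_rker (fun _ : 'I_1 => a)) ->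
  fg_rker (fun j : 'I_m => w (widen_ord (leqnSn m) j)) -> fg_rker w.
Proof.
move=> fg_row [K [u [u_ker u_gen]]].
pose a l := \sum_i w ord_max i * u l i.
have [K' [z [z_ker z_gen]]] := fg_row K a.
exists K', (fun t i => \sum_l u l i * z t l); split.
- move=> t j; under eq_bigr do rewrite mulr_sumr.
  rewrite exchange_big /=; case: (unliftP ord_max j) => [j' ->|->].
  + have -> : fintype.lift ord_max j' = widen_ord (leqnSn m) j'.
      by apply: val_inj; rewrite /= /bump leqNgt ltn_ord.
    apply: big1 => l _; rewrite -[RHS](mul0r (z t l)).
    rewrite -[X in _ = X * _](u_ker l j') mulr_suml.
    by apply: eq_bigr => i _; rewrite mulrA.
  + rewrite -[RHS](z_ker t ord0); apply: eq_bigr => l _; rewrite mulr_suml.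
    by apply: eq_bigr => i _; rewrite mulrA.
- move=> c c_ker; have [d cd] := u_gen c (fun j => c_ker _).
  have d_ker : rker (fun _ : 'I_1 => a) d.
    move=> _; rewrite -[RHS](c_ker ord_max).
    under eq_bigr do rewrite mulr_suml.
    rewrite exchange_big /=; apply: eq_bigr => i _; rewrite cd mulr_sumr.
    by apply: eq_bigr => l _; rewrite mulrA.
  have [e de] := z_gen d d_ker; exists e => i; rewrite cd.
  under eq_bigr do rewrite de mulr_sumr.
  rewrite exchange_big /=; apply: eq_bigr => t _; rewrite mulr_suml.
  by apply: eq_bigr => l _; rewrite mulrA.
Qed.

Lemma coherent_fg_rker (hR : right_coherent R) m n (w : 'I_m -> 'I_n -> R) :
  fg_rker w.
Proof.
elim: m w => [|m IH] w; first exact: fg_rker0.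
exact: fg_rker_addrow (coherent_fg_rker_row hR) (IH _).
Qed.
End RightKernel.

(** * Finitely presented modules *)

Definition mklinear (S : pzRingType) (U V : lmodType S) (f : U -> V)
  (fL : linear f) : {linear U -> V} :=
  HB.pack f (GRing.isLinear.Build S U V *:%R f fL).

Lemma mklinearE (S : pzRingType) (U V : lmodType S) (f : U -> V)
  (fL : linear f) x : mklinear fL x = f x.
Proof. by []. Qed.

Definition asbool (P : Prop) : bool :=
  if excluded_middle_informative P then true else false.

Lemma asboolP (P : Prop) : reflect P (asbool P).
Proof. by rewrite /asbool; case: excluded_middle_informative => h; constructor. Qed.

(* The cokernel S^n / (S W_0 + ... + S W_(m-1)) of the row vectors [W j],
   built as the type of canonical representatives of the classes. *)
Section Cokernel.
Variables (S : pzRingType) (n m : nat) (W : 'I_m -> 'rV[S]_n).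
Implicit Types c d : 'rV[S]_n.

Definition corel c d := exists e : 'I_m -> S, c - d = \sum_j e j *: W j.

Lemma corel_refl c : corel c c.
Proof. by exists (fun _ => 0); rewrite subrr big1 // => j _; rewrite scale0r. Qed.

Lemma corel_sym c d : corel c d -> corel d c.
Proof.
move=> [e ce]; exists (fun j => - e j); rewrite -opprB ce -sumrN.
by apply: eq_bigr => j _; rewrite scaleNr.
Qed.

Lemma corel_trans d c f : corel c d -> corel d f -> corel c f.
Proof.
move=> [e ce] [e' ce']; exists (fun j => e j + e' j).
rewrite -[c](subrK d) -addrA ce ce' -big_split /=.
by apply: eq_bigr => j _; rewrite scalerDl.
Qed.

Lemma corelD c c' d d' : corel c c' -> corel d d' -> corel (c + d) (c' + d').
Proof.
move=> [e ce] [e' de']; exists (fun j => e j + e' j).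
rewrite opprD addrACA ce de' -big_split /=.
by apply: eq_bigr => j _; rewrite scalerDl.
Qed.

Lemma corelN c c' : corel c c' -> corel (- c) (- c').
Proof.
move=> [e ce]; exists (fun j => - e j); rewrite -opprD ce -sumrN.
by apply: eq_bigr => j _; rewrite scaleNr.
Qed.

Lemma corelZ a c c' : corel c c' -> corel (a *: c) (a *: c').
Proof.
move=> [e ce]; exists (fun j => a * e j); rewrite -scalerBr ce scaler_sumr.
by apply: eq_bigr => j _; rewrite scalerA.
Qed.

Lemma corel_ex c : exists d, asbool (corel c d).
Proof. by exists c; apply/asboolP; apply: corel_refl. Qed.

Definition corepr c := xchoose (corel_ex c).

Lemma corel_repr c : corel c (corepr c).
Proof. exact/asboolP/(xchooseP (corel_ex c)). Qed.

Lemma corepr_eq c d : corel c d -> corepr c = corepr d.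
Proof.
move=> cd; apply: eq_xchoose => f; apply/asboolP/asboolP.
  exact: corel_trans (corel_sym cd).
exact: corel_trans cd.
Qed.

Lemma corepr_id c : corepr (corepr c) = corepr c.
Proof. exact/corepr_eq/corel_sym/corel_repr. Qed.

Definition coker := {c : 'rV[S]_n | corepr c == c}.

Definition cls c : coker := exist _ (corepr c) (introT eqP (corepr_id c)).

Lemma clsK (x : coker) : cls (sval x) = x.
Proof.
by case: x => c cP; apply: eq_sig_hprop => [z|]; [apply: eq_irrelevance | apply/eqP].
Qed.

Lemma cls_eq c d : cls c = cls d <-> corel c d.
Proof.
split=> [/(congr1 sval) /= cd|cd].
  by apply: corel_trans (corel_repr c) _; rewrite cd; apply/corel_sym/corel_repr.
by apply: eq_sig_hprop => [z|]; [apply: eq_irrelevance | apply: corepr_eq].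
Qed.

Lemma cls_corel c : corel (sval (cls c)) c.
Proof. exact/corel_sym/corel_repr. Qed.

Definition coadd (x y : coker) := cls (sval x + sval y).
Definition coopp (x : coker) := cls (- sval x).
Definition cozero := cls 0.
Definition coscale (a : S) (x : coker) := cls (a *: sval x).

Lemma coaddE c d : coadd (cls c) (cls d) = cls (c + d).
Proof. exact/cls_eq/corelD/cls_corel/cls_corel. Qed.
Lemma cooppE c : coopp (cls c) = cls (- c).
Proof. exact/cls_eq/corelN/cls_corel. Qed.
Lemma coscaleE a c : coscale a (cls c) = cls (a *: c).
Proof. exact/cls_eq/corelZ/cls_corel. Qed.

Lemma coaddA : associative coadd.
Proof. by move=> x y z; rewrite -[x]clsK -[y]clsK -[z]clsK !coaddE addrA. Qed.
Lemma coaddC : commutative coadd.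
Proof. by move=> x y; rewrite -[x]clsK -[y]clsK !coaddE addrC. Qed.
Lemma coadd0 : left_id cozero coadd.
Proof. by move=> x; rewrite -[x]clsK /cozero coaddE add0r. Qed.
Lemma coaddN : left_inverse cozero coopp coadd.
Proof. by move=> x; rewrite -[x]clsK cooppE coaddE addNr. Qed.
Lemma coscaleA a b x : coscale a (coscale b x) = coscale (a * b) x.
Proof. by rewrite -[x]clsK !coscaleE scalerA. Qed.
Lemma coscale1 : left_id 1 coscale.
Proof. by move=> x; rewrite -[x]clsK coscaleE scale1r. Qed.
Lemma coscaleDr : right_distributive coscale coadd.
Proof.
by move=> a x y; rewrite -[x]clsK -[y]clsK coaddE !coscaleE coaddE scalerDr.
Qed.
Lemma coscaleDl x : {morph coscale^~ x : a b / a + b >-> coadd a b}.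
Proof. by move=> a b; rewrite -[x]clsK !coscaleE coaddE scalerDl. Qed.
End Cokernel.

HB.instance Definition _ (S : pzRingType) (n m : nat) (W : 'I_m -> 'rV[S]_n) :=
  Choice.on (coker W).
HB.instance Definition _ (S : pzRingType) (n m : nat) (W : 'I_m -> 'rV[S]_n) :=
  GRing.isZmodule.Build (coker W) (@coaddA S n m W) (@coaddC S n m W)
    (@coadd0 S n m W) (@coaddN S n m W).
HB.instance Definition _ (S : pzRingType) (n m : nat) (W : 'I_m -> 'rV[S]_n) :=
  GRing.Zmodule_isLmodule.Build S (coker W) (@coscaleA S n m W)
    (@coscale1 S n m W) (@coscaleDr S n m W) (@coscaleDl S n m W).

Section CokernelTheory.
Variables (S : pzRingType) (n m : nat) (W : 'I_m -> 'rV[S]_n).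
Local Notation cls := (@cls S n m W).

Lemma cls_is_linear : linear cls.
Proof.
move=> a c d; rewrite -[RHS]/(coadd (coscale a (cls c)) (cls d)).
by rewrite coscaleE coaddE.
Qed.

HB.instance Definition _ := GRing.isLinear.Build S 'rV[S]_n (coker W) *:%R cls
  cls_is_linear.

Lemma cls_eq0 c : cls c = 0 <-> corel W c 0.
Proof. exact: cls_eq. Qed.

Lemma cls_rel j : cls (W j) = 0.
Proof.
apply/cls_eq0; exists (fun j' => (j' == j)%:R).
rewrite subr0 (bigD1 j) //= eqxx scale1r big1 ?addr0 // => j' /negPf ->.
exact: scale0r.
Qed.
End CokernelTheory.

Record presentation (S : pzRingType) (V : lmodType S) := Presentation {
  npgen : nat;
  nprel : nat;
  pgen : 'I_npgen -> V;
  prel : 'I_nprel -> 'I_npgen -> S;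
  pgen_span : forall x, exists c : 'I_npgen -> S, x = \sum_i c i *: pgen i;
  prelP : forall j, \sum_i prel j i *: pgen i = 0;
  prel_complete : forall c : 'I_npgen -> S, \sum_i c i *: pgen i = 0 ->
    exists d : 'I_nprel -> S, forall i, c i = \sum_j d j * prel j i
}.

Arguments pgen {S V} p i : rename.
Arguments prel {S V} p j i : rename.
Arguments prelP {S V} p j : rename.

Lemma fin_presP (S : pzRingType) (V : lmodType S) :
  fin_pres V -> inhabited (presentation V).
Proof.
by move=> [n [v [vspan [m [w [wP wcomplete]]]]]]; constructor; exists n m v w.
Qed.

Lemma presentation_fin_pres (S : pzRingType) (V : lmodType S) :
  presentation V -> fin_pres V.
Proof.
move=> P; exists _, (pgen P); split; first exact: pgen_span.
by exists _, (prel P); split; [apply: prelP | apply: prel_complete].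
Qed.

Section PresentationLift.
Variables (S : pzRingType) (V U : lmodType S) (P : presentation V).
Local Notation v := (pgen P).
Local Notation w := (prel P).

Lemma pres_coord_eq (u : 'I_(npgen P) -> U) :
  (forall j, \sum_i w j i *: u i = 0) ->
  forall c c', \sum_i c i *: v i = \sum_i c' i *: v i ->
    \sum_i c i *: u i = \sum_i c' i *: u i.
Proof.
move=> uP c c' cc'; apply/eqP; rewrite -subr_eq0 -sumrB.
have [d cd] : exists d, forall i, c i - c' i = \sum_j d j * w j i.
  by apply: prel_complete; under eq_bigr do rewrite scalerBl; rewrite sumrB cc' subrr.
under eq_bigr do rewrite -scalerBl cd scaler_suml.
rewrite exchange_big /=; apply/eqP/big1 => j _.
by under eq_bigr do rewrite -scalerA; rewrite -scaler_sumr uP scaler0.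
Qed.

Lemma pres_lift (u : 'I_(npgen P) -> U) :
  (forall j, \sum_i w j i *: u i = 0) ->
  exists F : {linear V -> U}, forall i, F (v i) = u i.
Proof.
move=> uP.
pose coord x := proj1_sig (constructive_indefinite_description _ (pgen_span P x)).
have coordP x : x = \sum_i coord x i *: v i.
  by rewrite /coord; case: constructive_indefinite_description.
pose f x := \sum_i coord x i *: u i.
have fE c : f (\sum_i c i *: v i) = \sum_i c i *: u i.
  by apply: (pres_coord_eq uP); rewrite -coordP.
have fL : linear f.
  move=> a x y; rewrite {1}(coordP x) {1}(coordP y) scaler_sumr -big_split /=.
  under eq_bigr do rewrite scalerA -scalerDl.
  rewrite fE scaler_sumr -big_split /=.
  by apply: eq_bigr => i _; rewrite scalerDl scalerA.
exists (mklinear fL) => i; rewrite mklinearE.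
by rewrite -(sum_deltaZ i (pgen P)) fE sum_deltaZ.
Qed.

Lemma pres_linear_eq (F G : {linear V -> U}) :
  (forall i, F (v i) = G (v i)) -> F =1 G.
Proof.
move=> FG x; have [c ->] := pgen_span P x; rewrite !linear_sum.
by apply: eq_bigr => i _; rewrite !linearZ FG.
Qed.
End PresentationLift.

Section StandardPresentations.
Variable S : pzRingType.

Lemma sum_delta_row n (c : 'I_n -> S) : \sum_i c i *: 'e_i = \row_i c i.
Proof.
apply/rowP => j; rewrite summxE mxE.
under eq_bigr do rewrite !mxE eqxx /= eq_sym.
exact: sum_delta_mulr.
Qed.

Definition row_presentation n : presentation 'rV[S]_n.
Proof.
refine (@Presentation _ _ n 0 (fun i => 'e_i) (fun _ _ => 0) _ _ _).
- by move=> x; exists (x 0); apply: row_sum_delta.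
- by case=> j; rewrite ltn0.
- move=> c; rewrite sum_delta_row => c0; exists (fun _ => 0) => i.
  by rewrite big_ord0; have := congr1 (fun x : 'rV_n => x 0 i) c0; rewrite !mxE.
Defined.

Lemma fin_pres_row n : fin_pres 'rV[S]_n.
Proof. exact: presentation_fin_pres (row_presentation n). Qed.
End StandardPresentations.

Section CokerPresentation.
Variables (S : pzRingType) (n m : nat) (W : 'I_m -> 'rV[S]_n).

Lemma cls_sum_delta (c : 'I_n -> S) :
  \sum_i c i *: cls W 'e_i = cls W (\row_i c i).
Proof.
by rewrite -sum_delta_row linear_sum; apply: eq_bigr => i _; rewrite linearZ.
Qed.

Definition coker_presentation : presentation (coker W).
Proof.
refine (@Presentation _ _ n m (fun i => cls W 'e_i) (fun j i => W j 0 i) _ _ _).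
- move=> x; exists (sval x 0); rewrite cls_sum_delta -[LHS]clsK.
  by congr cls; apply/rowP => i; rewrite mxE.
- move=> j; rewrite cls_sum_delta -[RHS](cls_rel W j).
  by congr cls; apply/rowP => i; rewrite mxE.
- move=> c; rewrite cls_sum_delta => /cls_eq0 [e]; rewrite subr0 => ce.
  exists e => i; have := congr1 (fun x : 'rV_n => x 0 i) ce; rewrite !mxE => ->.
  by rewrite summxE; apply: eq_bigr => j _; rewrite mxE.
Defined.

Lemma prel_cokerE j i : prel coker_presentation j i = W j 0 i.
Proof. by []. Qed.

Lemma fin_pres_coker : fin_pres (coker W).
Proof. exact: presentation_fin_pres coker_presentation. Qed.
End CokerPresentation.

Section RowComb.
Variables (S : pzRingType) (U : lmodType S) (K : nat) (nu : 'I_K -> U).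

Definition rowcomb (z : 'rV[S]_K) : U := \sum_k z 0 k *: nu k.

Lemma rowcomb_is_linear : linear rowcomb.
Proof.
move=> a z z'; rewrite /rowcomb scaler_sumr -big_split /=.
by apply: eq_bigr => k _; rewrite !mxE scalerDl scalerA.
Qed.

HB.instance Definition _ :=
  GRing.isLinear.Build S 'rV[S]_K U *:%R rowcomb rowcomb_is_linear.
End RowComb.

(** * The equational criterion for flatness *)

Definition equational_criterion (R : pzRingType) (M : lmodType R) :=
  forall (n m : nat) (w : 'I_m -> 'I_n -> R) (mu : 'I_n -> M),
    (forall j, \sum_i w j i *: mu i = 0) ->
    exists (K : nat) (x : 'I_K -> 'I_n -> R) (nu : 'I_K -> M),
      (forall k, rker w (x k)) /\ (forall i, mu i = \sum_k x k i *: nu k).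

Section RightRows.
Variable R : pzRingType.

(* Left multiplication by [w] on right row vectors, i.e. a matrix over R^c
   acting on the right. *)
Definition rmx (m n : nat) (w : 'I_m -> 'I_n -> R) : 'M[R^c]_(n, m) :=
  \matrix_(i, j) (w j i : R^c).

Lemma mulmx_rmxE m n (w : 'I_m -> 'I_n -> R) (y : 'rV[R^c]_n) j :
  (y *m rmx w) 0 j = \sum_i w j i * y 0 i.
Proof. by rewrite mxE; apply: eq_bigr => i _; rewrite mxE. Qed.

Lemma rker_mulmx_rmx m n (w : 'I_m -> 'I_n -> R) (y : 'rV[R^c]_n) :
  y *m rmx w = 0 -> rker w (y 0).
Proof. by move=> wy j; rewrite -mulmx_rmxE wy mxE. Qed.

Lemma mulmx_rmx_exact m n (w : 'I_m -> 'I_n -> R) K (x : 'I_K -> 'I_n -> R) :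
    (forall k, rker w (x k)) ->
    (forall c, rker w c ->
       exists d : 'I_K -> R, forall i, c i = \sum_k x k i * d k) ->
  forall y : 'rV[R^c]_n,
    y *m rmx w = 0 <-> exists d, d *m rmx (fun i k => x k i) = y.
Proof.
move=> x_ker x_gen y; split=> [wy|[d <-]].
  have [e ye] := x_gen _ (rker_mulmx_rmx wy).
  exists (\row_k (e k : R^c)); apply/rowP => i.
  by rewrite mulmx_rmxE ye; apply: eq_bigr => k _; rewrite mxE.
apply/rowP => j; rewrite mulmx_rmxE mxE.
under eq_bigr do rewrite mulmx_rmxE mulr_sumr.
rewrite exchange_big /=; apply: big1 => k _.
transitivity ((\sum_i w j i * x k i) * d 0 k : R); last by rewrite x_ker mul0r.
by rewrite mulr_suml; apply: eq_bigr => i _; rewrite mulrA.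
Qed.
End RightRows.

Section FlatEquational.
Variables (R : pzRingType) (M : lmodType R).

Lemma teq_row_coord n (s1 s2 : seq ('rV[R^c]_n * M)) i : teq s1 s2 ->
  \sum_(p <- s1) (p.1 0 i : R) *: p.2 = \sum_(p <- s2) (p.1 0 i : R) *: p.2.
Proof.
apply: tlift_teq => [y y' m|y m m'|r y m] /=; first by rewrite mxE scalerDl.
  exact: scalerDr.
by rewrite mxE scalerA.
Qed.

Lemma trel_sum_row_rel m n (w : 'I_m -> 'I_n -> R) (mu : 'I_n -> M) :
  (forall j, \sum_i w j i *: mu i = 0) ->
  trel (\sum_i tgen (('e_i : 'rV[R^c]_n) *m rmx w, mu i)).
Proof.
move=> muP; apply/teqv0.
have eiE i : ('e_i : 'rV[R^c]_n) *m rmx w = \sum_j (w j i : R^c) *: 'e_j.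
  rewrite sum_delta_row; apply/rowP => j; rewrite mulmx_rmxE mxE.
  by under eq_bigr do rewrite mxE eqxx /=; rewrite sum_delta_mulr.
under eq_bigr do rewrite eiE.
apply: teqv_trans (teqv_sym (tgen_sum_balance _ _ _ _ _)) _.
by apply: teqv_sum0 => j _; rewrite muP; apply: tgen0r.
Qed.

Lemma flat_equational_criterion :
  right_coherent R -> flat M -> equational_criterion M.
Proof.
move=> hR Mflat n m w mu muP.
have [K [x [x_ker x_gen]]] := coherent_fg_rker hR w.
pose s := [seq ('e_i : 'rV[R^c]_n, mu i) | i <- enum 'I_n].
have s0 : teq (tmap (mulmxr (rmx w)) s) [::].
  apply/teq_nil; rewrite /tsum /tmap -map_comp big_map big_enum /=.
  exact: trel_sum_row_rel.
have [t ts] := (Mflat _ _ _ (mulmxr (rmx (fun i k => x k i))) (mulmxr (rmx w))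
  (mulmx_rmx_exact x_ker x_gen) s).1 s0.
pose p0 : 'rV[R^c]_K * M := (0, 0).
pose xt i k := x k i.
exists (size t), (fun l => ((nth p0 t l).1 *m rmx xt) 0),
  (fun l => (nth p0 t l).2).
split=> [l|i].
  apply: rker_mulmx_rmx; apply/(mulmx_rmx_exact x_ker x_gen).
  by eexists.
have -> : mu i = \sum_(p <- s) (p.1 0 i : R) *: p.2.
  rewrite big_map big_enum /=; under eq_bigr do rewrite mxE eqxx /= eq_sym.
  by rewrite sum_deltaZ.
by rewrite -(teq_row_coord i ts) /tmap big_map (big_nth p0) big_mkord.
Qed.
End FlatEquational.

Section Vanishing.
Variables (R : pzRingType) (Z : lmodType R^c) (M : lmodType R).

Definition tcoef (u : {freeg (Z * M) / int}) (m : M) : Z :=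
  tlift (fun q : Z * M => if q.2 == m then q.1 else 0) u.

Lemma trel_tcoef u : trel u ->
  exists C : seq (Z * seq (M * R)),
    (forall c, c \in C -> \sum_(q <- c.2) q.2 *: q.1 = 0) /\
    forall m, tcoef u m =
      \sum_(c <- C) \sum_(q <- c.2 | q.1 == m) (q.2 : R^c) *: c.1.
Proof.
elim=> [|z1 z2 _ [C1 [C1rel C1E]] _ [C2 [C2rel C2E]]|x x' m|x m m'|r x m].
- by exists [::]; split=> // m; rewrite /tcoef raddf0 big_nil.
- exists (C1 ++ [seq (- c.1, c.2) | c <- C2]); split.
    by move=> c; rewrite mem_cat => /orP [/C1rel | /mapP [c' /C2rel ? ->]].
  move=> m; rewrite /tcoef raddfB /= -/(tcoef z1 m) -/(tcoef z2 m) C1E C2E.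
  rewrite big_cat big_map /= -sumrN; congr (_ + _); apply: eq_bigr => c _.
  by rewrite -sumrN; apply: eq_bigr => q _; rewrite scalerN.
- exists [::]; split=> // p; rewrite big_nil /tcoef !raddfB /= !tliftU /=.
  by case: (m == p); rewrite ?subrr // addrAC addrK subrr.
- exists [:: (x, [:: (m + m', 1); (m, -1); (m', -1)])]; split.
    move=> c; rewrite inE => /eqP -> /=.
    by rewrite !big_cons big_nil /= scale1r !scaleN1r addr0 -opprD subrr.
  move=> p; rewrite big_cons big_nil addr0 /tcoef !raddfB /= !tliftU /=.
  rewrite !big_cons big_nil /=.
  case: (m + m' == p); case: (m == p); case: (m' == p);
    by rewrite ?scale1r ?scaleN1r ?oppr0 ?addr0 ?add0r ?subr0 ?sub0r ?addrA.
- exists [:: (x, [:: (m, r); (r *: m, -1)])]; split.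
    move=> c; rewrite inE => /eqP -> /=.
    by rewrite !big_cons big_nil /= scaleN1r addr0 subrr.
  move=> p; rewrite big_cons big_nil addr0 /tcoef !raddfB /= !tliftU /=.
  rewrite !big_cons big_nil /=.
  by case: (m == p); case: (r *: m == p);
    rewrite ?scaleN1r ?oppr0 ?addr0 ?add0r ?subr0 ?sub0r.
Qed.
End Vanishing.

Lemma uniq_sum_nth_pred1 (T : eqType) (P : seq T) (x0 y : T) :
  uniq P -> y \in P ->
  exists i0 : 'I_(size P), nth x0 P i0 = y /\
    forall (V : nmodType) (G : 'I_(size P) -> V),
      \sum_(i < size P | nth x0 P i == y) G i = G i0.
Proof.
move=> Puniq yP; have yidx : (index y P < size P)%N by rewrite index_mem.
exists (Ordinal yidx); split=> [|V G]; first exact: nth_index.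
by apply: big_pred1 => i /=; rewrite -{1}(nth_index x0 yP) nth_uniq.
Qed.

(* Equational criterion => flat: a vanishing tensor is rewritten along the
   relations of M witnessing its vanishing, which the criterion splits. *)
Section EquationalFlat.
Variables (R : pzRingType) (M : lmodType R).
Variables (Y Z : lmodType R^c) (g : {linear Y -> Z}).
Variables (s : seq (Y * M)) (C : seq (Z * seq (M * R))).
Hypothesis Crel : forall c, c \in C -> \sum_(q <- c.2) q.2 *: q.1 = 0.
Hypothesis CE : forall m, tcoef (tsum (tmap g s)) m =
  \sum_(c <- C) \sum_(q <- c.2 | q.1 == m) (q.2 : R^c) *: c.1.

Definition occurring : seq M :=
  undup ([seq p.2 | p <- s] ++ flatten [seq [seq q.1 | q <- c.2] | c <- C]).
Local Notation P := occurring.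
Definition occ (i : 'I_(size P)) : M := nth 0 P i.
Local Notation pt := occ.
Let c0 : Z * seq (M * R) := (0, [::]).
Definition relcoef (k : 'I_(size C)) (i : 'I_(size P)) : R :=
  \sum_(q <- (nth c0 C k).2 | q.1 == pt i) q.2.
Local Notation a := relcoef.

Let ptP mm : mm \in P -> exists i0, pt i0 = mm /\
    forall (V : nmodType) (G : 'I_(size P) -> V), \sum_(i | pt i == mm) G i = G i0.
Proof. exact: uniq_sum_nth_pred1 (undup_uniq _). Qed.

Lemma relation_coefsP k : \sum_i a k i *: pt i = 0.
Proof.
rewrite -[RHS](Crel (mem_nth c0 (ltn_ord k))).
under eq_bigr do rewrite scaler_suml big_mkcond.
rewrite exchange_big /=; apply: eq_big_seq => q qk.
have qP : q.1 \in P.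
  rewrite mem_undup mem_cat; apply/orP; right; apply/flatten_mapP.
  by exists (nth c0 C k); [apply: mem_nth | apply/mapP; exists q].
have [i0 [pti0 sumE]] := ptP qP.
rewrite -big_mkcond; under eq_bigl do rewrite eq_sym.
by rewrite (sumE _ (fun i => q.2 *: pt i)) pti0.
Qed.

Variables (K : nat) (x : 'I_K -> 'I_(size P) -> R) (nu : 'I_K -> M).
Hypothesis x_ker : forall k, rker a (x k).
Hypothesis ptE : forall i, pt i = \sum_k x k i *: nu k.

Definition lift_coef k (mm : M) : R := \sum_(i | pt i == mm) x k i.
Local Notation xt := lift_coef.
Definition lift_elt k : Y := \sum_(p <- s) (xt k p.2 : R^c) *: p.1.
Local Notation y := lift_elt.

Lemma support_decomp mm : mm \in P -> mm = \sum_k xt k mm *: nu k.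
Proof.
move=> mmP; have [i0 [<- sumE]] := ptP mmP.
under eq_bigr do rewrite scaler_suml.
by rewrite exchange_big /= (sumE _ (fun i => \sum_k x k i *: nu k)) -ptE.
Qed.

Lemma lift_ker k : g (y k) = 0.
Proof.
rewrite linear_sum /=.
under eq_bigr do rewrite linearZ /= scaler_suml big_mkcond /=.
rewrite exchange_big /=.
transitivity (\sum_i (x k i : R^c) *: tcoef (tsum (tmap g s)) (pt i)).
  apply: eq_bigr => i _; rewrite /tcoef tlift_tsum /tmap big_map scaler_sumr.
  by apply: eq_bigr => p _; rewrite [p.2 == _]eq_sym; case: ifP; rewrite ?scaler0.
under eq_bigr do rewrite CE (big_nth c0) big_mkord scaler_sumr.
rewrite exchange_big /=; apply: big1 => k' _.
transitivity (\sum_i ((a k' i * x k i : R) : R^c) *: (nth c0 C k').1).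
  by apply: eq_bigr => i _; rewrite /relcoef -scaler_suml scalerA.
by rewrite -scaler_suml (x_ker k k') scale0r.
Qed.

Lemma tsum_teqv_lift : teqv (tsum s) (\sum_k tgen (y k, nu k)).
Proof.
apply: (@teqv_trans _ _ _ (\sum_(p <- s) tgen (p.1, \sum_k xt k p.2 *: nu k))).
  apply: eq_teqv; apply: eq_big_seq => -[y0 m0] pin /=.
  rewrite -support_decomp // mem_undup mem_cat; apply/orP; left.
  by apply/mapP; exists (y0, m0).
exact: (tgen_sum_balance s (index_enum 'I_K) (fun p => p.1) (fun p k => xt k p.2) nu).
Qed.
End EquationalFlat.

Lemma equational_criterion_flat (R : pzRingType) (M : lmodType R) :
  equational_criterion M -> flat M.
Proof.
move=> hE X Y Z f g fg_exact s.
split=> [/teq_nil /trel_tcoef [C [Crel CE]] | [t ts]].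
  have [K [x [nu [x_ker ptE]]]] := hE _ _ _ _ (relation_coefsP s Crel).
  have [F FE] := fin_all_exists (fun k => (fg_exact _).1 (lift_ker CE x_ker k)).
  exists [seq (F k, nu k) | k <- enum 'I_K]; apply: teqv_sym.
  rewrite /tsum /tmap -map_comp big_map big_enum /=.
  under [X in teqv _ X]eq_bigr do rewrite /= FE.
  exact: tsum_teqv_lift ptE.
apply/teq_nil; have gts := teq_tmap g ts.
apply: (trel_teqv (teqv_sym gts)); apply/teqv0.
rewrite /tsum /tmap -map_comp big_map; apply: teqv_sum0 => p _ /=.
have -> : g (f p.1) = 0 by apply/fg_exact; exists p.1.
exact: tgen0l.
Qed.

Lemma scale_sum_linear (R : pzRingType) (B M : lmodType R) K
    (H : 'I_K -> {linear B -> R^o}) (nu : 'I_K -> M) :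
  linear (fun b => \sum_k (H k b : R) *: nu k).
Proof.
move=> r b b'; rewrite scaler_sumr -big_split /=; apply: eq_bigr => k _.
by rewrite linearD linearZ /= scalerDl scalerA.
Qed.

(** * Covariant defect and evaluation *)

Section CovdefectEquational.
Variables (R : pzRingType) (M : lmodType R).

Lemma equational_criterion_ev_zero : equational_criterion M ->
  forall G : fpfunctor R, covdefect_zero G -> ev_zero G M.
Proof.
move=> hE [A B Afp Bfp al] cov g /=; have [P] := fin_presP Afp.
have gP j : \sum_i prel P j i *: g (pgen P i) = 0.
  rewrite -[RHS](linear0 g) -(prelP P j) linear_sum.
  by apply: eq_bigr => i _; rewrite linearZ.
have [K [x [nu [x_ker gE]]]] := hE _ _ _ _ gP.
have [F FE] := fin_all_exists (fun k => @pres_lift _ _ R^o P (x k) (x_ker k)).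
have [H HE] := fin_all_exists (fun k => cov (F k)).
pose h := mklinear (scale_sum_linear H nu).
exists h; apply: (pres_linear_eq (P := P) (G := h \o al)) => i /=.
by rewrite gE; apply: eq_bigr => k _; rewrite -HE FE.
Qed.

Lemma ev_zero_equational_criterion : right_coherent R ->
  (forall G : fpfunctor R, covdefect_zero G -> ev_zero G M) -> equational_criterion M.
Proof.
move=> hR covM n m w mu muP.
have [K [x [x_ker x_gen]]] := coherent_fg_rker hR w.
pose W j := \row_i w j i : 'rV[R]_n.
pose P := coker_presentation W.
have alP j : \sum_i prel P j i *: (\row_k x k i : 'rV[R]_K) = 0.
  apply/rowP => k; rewrite summxE mxE -[RHS](x_ker k j).
  by apply: eq_bigr => i _; rewrite prel_cokerE !mxE.
have [al alE] := pres_lift alP.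
pose G := FPFunctor (fin_pres_coker W) (fin_pres_row R K) al.
have cov : covdefect_zero G.
  move=> phi; have [d phiE] : exists d : 'I_K -> R,
      forall i, phi (pgen P i) = \sum_k x k i * d k.
    apply: x_gen => j; rewrite -[RHS](linear0 phi) -(prelP P j) linear_sum.
    by apply: eq_bigr => i _; rewrite linearZ prel_cokerE mxE.
  exists (rowcomb (d : 'I_K -> R^o)).
  apply: (pres_linear_eq (P := P) (G := rowcomb (d : 'I_K -> R^o) \o al)) => i /=.
  by rewrite phiE alE; apply: eq_bigr => k _; rewrite mxE.
have gP j : \sum_i prel P j i *: mu i = 0.
  by rewrite -[RHS](muP j); apply: eq_bigr => i _; rewrite prel_cokerE mxE.
have [g gE] := pres_lift gP.
have [h ghE] := covM G cov g.
exists K, x, (fun k => h 'e_k); split=> // i.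
rewrite -gE ghE /= alE [X in h X]row_sum_delta linear_sum.
by apply: eq_bigr => k _; rewrite linearZ mxE.
Qed.
End CovdefectEquational.

(** * fp-faithful flatness *)

Section Annihilator.
Variables (R : pzRingType) (N : lmodType R^c).

Definition generates_ann (y : N) K (r : 'I_K -> R) :=
  (forall k, (r k : R^c) *: y = 0) /\
  forall a : R, (a : R^c) *: y = 0 -> exists e : 'I_K -> R, a = \sum_k r k * e k.

(* Writing y = \sum_l c_l v_l in a presentation, y a = 0 means that
   (a, d) solves c_l a = \sum_j rel_(j,l) d_j for some d. *)
Lemma coherent_generates_ann : right_coherent R -> presentation N ->
  forall y : N, exists K (r : 'I_K -> R), generates_ann y r.
Proof.
move=> hR P y; have [c yE] := pgen_span P y.
pose w l (t : 'I_(1 + nprel P)) : R :=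
  match split t with inl _ => (c l : R) | inr j => - (prel P j l : R) end.
have [K [x [x_ker x_gen]]] := coherent_fg_rker hR w.
have solE z l : rker w z ->
    (c l : R) * z (lshift _ ord0) = \sum_j (prel P j l : R) * z (rshift 1 j).
  move/(_ l)/eqP; rewrite big_split_ord /= big_ord1 /w split_lshift.
  under eq_bigr do rewrite split_rshift mulNr.
  by rewrite sumrN subr_eq0 => /eqP ->.
exists K, (fun k => x k (lshift _ ord0)); split=> [k|a ya].
  rewrite yE scaler_sumr.
  transitivity
    (\sum_l \sum_j ((prel P j l : R) * x k (rshift 1 j) : R^c) *: pgen P l).
    apply: eq_bigr => l _; rewrite scalerA -scaler_suml; congr (_ *: _).
    exact: solE (x_ker k).
  rewrite exchange_big /=; apply: big1 => j _.
  transitivity (\sum_l (x k (rshift 1 j) : R^c) *: (prel P j l *: pgen P l)).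
    by apply: eq_bigr => l _; rewrite scalerA.
  by rewrite -scaler_sumr prelP scaler0.
have [d cd] : exists d : 'I_(nprel P) -> R^c,
    forall l, ((c l : R) * a : R^c) = \sum_j d j * prel P j l.
  apply: prel_complete; rewrite -[RHS]ya yE scaler_sumr.
  by apply: eq_bigr => l _; rewrite scalerA.
pose z (t : 'I_(1 + nprel P)) : R :=
  match split t with inl _ => a | inr j => (d j : R) end.
have z_ker : rker w z.
  move=> l; rewrite big_split_ord /= big_ord1 /w /z split_lshift.
  under eq_bigr do rewrite split_rshift mulNr.
  by rewrite sumrN cd subrr.
have [e ze] := x_gen z z_ker.
by exists e; have := ze (lshift _ ord0); rewrite /z split_lshift.
Qed.
End Annihilator.

Section FlatAnnihilator.
Variables (R : pzRingType) (M : lmodType R) (N : lmodType R^c).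
Variables (y : N) (K : nat) (r : 'I_K -> R).
Hypothesis r_ann : generates_ann y r.

Let act_is_linear : linear (fun z : 'rV[R^c]_1 => z 0 0 *: y).
Proof. by move=> a z z'; rewrite !mxE scalerDl scalerA. Qed.

Let act := mklinear act_is_linear.

Let ann_exact (z : 'rV[R^c]_1) :
  act z = 0 <-> exists e, mulmxr (rmx (fun (_ : 'I_1) k => r k)) e = z.
Proof.
split=> [/r_ann.2 [e ze] | [e <-]].
  by exists (\row_k (e k : R^c)); apply/rowP => i; rewrite ord1 mulmx_rmxE ze;
    apply: eq_bigr => k _; rewrite mxE.
rewrite mklinearE /= mulmx_rmxE scaler_suml; apply: big1 => k _.
by rewrite -[RHS](scaler0 _ (e 0 k)) -(r_ann.1 k) scalerA.
Qed.

Lemma flat_ann_tgen : flat M -> forall m : M, trel (tgen (y, m)) ->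
  exists nu : 'I_K -> M, m = \sum_k r k *: nu k.
Proof.
move=> Mflat m ym0.
have s0 : teq (tmap act [:: ('e_0, m)]) [::].
  by apply/teq_nil; rewrite /tmap /= tsum_cons tsum_nil addr0 mxE scale1r.
have [t ts] := (Mflat _ _ _ _ _ ann_exact _).1 s0.
exists (fun k => \sum_(p <- t) (p.1 0 k : R) *: p.2).
have := teq_row_coord 0 ts.
rewrite /tmap big_map !big_cons big_nil mxE scale1r addr0 /=.
move=> <-; under eq_bigr do rewrite /= mulmx_rmxE scaler_suml.
rewrite exchange_big /=; apply: eq_bigr => k _; rewrite scaler_sumr.
by apply: eq_bigr => p _; rewrite scalerA.
Qed.
End FlatAnnihilator.

(* With (r_k) generating the right annihilator of y = f n0 - g n0, the functor
   Coker Hom(R --(r_k)--> R^K, -) vanishes at M by [flat_ann_tgen]; its zero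
   covariant defect puts 1 in the right ideal of the r_k, whence y = 0. *)
Lemma ev_zero_covdefect_fp_faithful (R : pzRingType) (M : lmodType R) :
  right_coherent R -> flat M ->
  (forall G : fpfunctor R, ev_zero G M -> covdefect_zero G) -> fp_faithful M.
Proof.
move=> hR Mflat evcov N N' _ N'fp f g fg n0; have [P] := fin_presP N'fp.
pose y := f n0 - g n0; have [K [r r_ann]] := coherent_generates_ann hR P y.
have y0 (m : M) : trel (tgen (y, m)).
  have := fg [:: (n0, m)]; rewrite /teq /tmap /= !tsum_cons !tsum_nil !addr0.
  exact: trel_teqv (tgenBl _ _ _).
pose G := FPFunctor (fin_pres_row R 1) (fin_pres_row R K) (mulmxr (\row_k r k)).
have evG : ev_zero G M.
  move=> h; have [nu hE] := flat_ann_tgen r_ann Mflat (y0 (h 'e_0)).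
  exists (rowcomb nu) => a /=.
  rewrite [in LHS](row_sum_delta a) big_ord1 linearZ /= hE scaler_sumr.
  by apply: eq_bigr => k _; rewrite mxE big_ord1 !mxE scalerA.
have [h hE] := evcov G evG (rowcomb (fun=> 1 : R^o)).
have one_ann : 1 = \sum_k r k * h 'e_k.
  have := hE 'e_0; rewrite /= /rowcomb big_ord1 mxE eqxx /= scale1r => ->.
  rewrite [X in h X](row_sum_delta ('e_0 *m \row_k r k)) linear_sum.
  by apply: eq_bigr => k _; rewrite linearZ /= mxE big_ord1 !mxE mul1r.
apply/eqP; rewrite -subr_eq0 -/y -[y]scale1r.
have -> : (1 : R^c) = (\sum_k r k * h 'e_k : R) by rewrite -one_ann.
rewrite scaler_suml; apply/eqP/big1 => k _.
by rewrite -[RHS](scaler0 _ (h 'e_k : R^c)) -(r_ann.1 k) scalerA.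
Qed.

(* Compare the maps R -> D sending 1 to xi and to 0. *)
Lemma fp_faithful_tensor_eq0 (R : pzRingType) (M : lmodType R)
    (D : lmodType R^c) :
  fp_faithful M -> fin_pres D -> (forall (xi : D) (m : M), trel (tgen (xi, m))) ->
  forall xi : D, xi = 0.
Proof.
move=> Mfaith Dfp D0 xi.
have xiL : linear (fun z : 'rV[R^c]_1 => z 0 0 *: xi).
  by move=> a z z'; rewrite !mxE scalerDl scalerA.
have zL : linear (fun z : 'rV[R^c]_1 => 0 : D).
  by move=> a z z'; rewrite scaler0 addr0.
have := Mfaith _ _ (fin_pres_row _ 1) Dfp (mklinear xiL) (mklinear zL) _ 'e_0.
rewrite !mklinearE mxE eqxx scale1r; apply=> s.
rewrite /teq /tsum /tmap !big_map -sumrB; apply: trel_sum => q _ /=.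
apply: teqv_trans (tgen_bal _ _ _) _.
exact: teqv_trans ((teqv0 _).2 (D0 _ _)) (teqv_sym (@tgen0l _ D _ _)).
Qed.

(* For G = Coker Hom(al, -), the covariant defect
   G(R) = Hom(A, R) / al^* Hom(B, R) is presented as a right module: with x
   generating Hom(A, R) (viewed inside R^n through a presentation of A) and yv
   generating Hom(B, R), the class of x c vanishes iff x c = al^*(yv e) for
   some e, i.e. iff (c, e) lies in the right kernel of [x | - al^* yv],
   generated by z.  This is the cokernel D of the rows [defect_row]. *)
Section CovariantDefect.
Variables (R : pzRingType) (A B : lmodType R) (al : {linear A -> B}).
Variables (PA : presentation A) (PB : presentation B).
Local Notation n := (npgen PA).
Local Notation nB := (npgen PB).
Local Notation v := (pgen PA).
Local Notation u := (pgen PB).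
Variable acoef : 'I_n -> 'I_nB -> R.
Hypothesis alE : forall i, al (v i) = \sum_b acoef i b *: u b.

Definition alstar (psi : 'I_nB -> R) (i : 'I_n) : R := \sum_b acoef i b * psi b.

Lemma alstar_comb T (y : 'I_T -> 'I_nB -> R) (e : 'I_T -> R) i :
  alstar (fun b => \sum_l y l b * e l) i = \sum_l alstar (y l) i * e l.
Proof.
rewrite /alstar; under eq_bigr do rewrite mulr_sumr.
rewrite exchange_big /=; apply: eq_bigr => l _; rewrite mulr_suml.
by apply: eq_bigr => b _; rewrite mulrA.
Qed.

Lemma alstar_ker psi : rker (prel PB) psi -> rker (prel PA) (alstar psi).
Proof.
move=> psi_ker j.
have [d dE] : exists d, forall b,
    \sum_i prel PA j i * acoef i b = \sum_j' d j' * prel PB j' b.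
  apply: prel_complete; rewrite -[RHS](linear0 al) -(prelP PA j) linear_sum.
  under [RHS]eq_bigr do rewrite linearZ /= alE scaler_sumr.
  rewrite exchange_big /=; apply: eq_bigr => b _; rewrite scaler_suml.
  by apply: eq_bigr => i _; rewrite scalerA.
under eq_bigr do rewrite mulr_sumr.
rewrite exchange_big /=.
transitivity (\sum_b (\sum_i prel PA j i * acoef i b) * psi b).
  by apply: eq_bigr => b _; rewrite mulr_suml; apply: eq_bigr => i _; rewrite mulrA.
under eq_bigr do rewrite dE mulr_suml.
rewrite exchange_big /=; apply: big1 => j' _.
transitivity (d j' * \sum_b prel PB j' b * psi b); last by rewrite psi_ker mulr0.
by rewrite mulr_sumr; apply: eq_bigr => b _; rewrite mulrA.
Qed.

Lemma alstar_factor (phi : {linear A -> R^o}) psi : rker (prel PB) psi ->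
  (forall i, phi (v i) = alstar psi i) ->
  exists h : {linear B -> R^o}, forall a, phi a = h (al a).
Proof.
move=> psi_ker phiE; have [h hE] := @pres_lift _ _ R^o PB psi psi_ker.
exists h; apply: (pres_linear_eq (P := PA) (G := h \o al)) => i /=.
rewrite phiE alE linear_sum; apply: eq_bigr => b _.
by rewrite linearZ /= hE.
Qed.

Variables (p : nat) (x : 'I_p -> 'I_n -> R).
Hypothesis x_ker : forall k, rker (prel PA) (x k).
Hypothesis x_gen : forall c, rker (prel PA) c ->
  exists d : 'I_p -> R, forall i, c i = \sum_k x k i * d k.
Variables (pB : nat) (yv : 'I_pB -> 'I_nB -> R).
Hypothesis yv_ker : forall l, rker (prel PB) (yv l).
Hypothesis yv_gen : forall c, rker (prel PB) c ->
  exists d : 'I_pB -> R, forall i, c i = \sum_l yv l i * d l.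

Definition defect_rel (i : 'I_n) (t : 'I_(p + pB)) : R :=
  match split t with inl k => x k i | inr l => - alstar (yv l) i end.

Variables (Q : nat) (z : 'I_Q -> 'I_(p + pB) -> R).
Hypothesis z_ker : forall q, rker defect_rel (z q).
Hypothesis z_gen : forall c, rker defect_rel c ->
  exists d : 'I_Q -> R, forall t, c t = \sum_q z q t * d q.

Definition defect_row (q : 'I_Q) : 'rV[R^c]_p :=
  \row_k (z q (lshift pB k) : R^c).

Local Notation D := (coker defect_row).

Lemma rker_defect_rel zeta : rker defect_rel zeta <->
  forall i, \sum_k x k i * zeta (lshift pB k) =
            \sum_l alstar (yv l) i * zeta (rshift p l).
Proof.
have sumE i : \sum_t defect_rel i t * zeta t =
    \sum_k x k i * zeta (lshift pB k) - \sum_l alstar (yv l) i * zeta (rshift p l).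
  rewrite big_split_ord /= /defect_rel.
  under eq_bigr do rewrite split_lshift.
  under [X in _ + X]eq_bigr do rewrite split_rshift mulNr.
  by rewrite sumrN.
split=> h i; last by rewrite sumE h subrr.
by apply/eqP; rewrite -subr_eq0 -sumE h.
Qed.

Lemma cls_defect_eq0 (c : 'I_p -> R) (e : 'I_pB -> R) :
  (forall i, \sum_k x k i * c k = \sum_l alstar (yv l) i * e l) ->
  cls defect_row (\row_k (c k : R^c)) = 0.
Proof.
move=> ce; pose zeta t := match split t with inl k => c k | inr l => e l end.
have /z_gen [d zetaE] : rker defect_rel zeta.
  apply/rker_defect_rel => i; rewrite /zeta.
  under eq_bigr do rewrite split_lshift.
  by under [RHS]eq_bigr do rewrite split_rshift; apply: ce.
apply/cls_eq0; exists (fun q => (d q : R^c)); rewrite subr0.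
apply/rowP => k; rewrite mxE summxE.
have := zetaE (lshift pB k); rewrite /zeta split_lshift => ->.
by apply: eq_bigr => q _; rewrite !mxE.
Qed.

Variable M : lmodType R.
Hypothesis Meq : equational_criterion M.
Hypothesis Mev : forall g : {linear A -> M},
  exists h : {linear B -> M}, forall a, g a = h (al a).

Local Notation eps k := (cls defect_row 'e_k).

Lemma trel_defect_comb T (c : 'I_T -> 'I_p -> R) (nu : 'I_T -> M) :
  (forall t, cls defect_row (\row_k (c t k : R^c)) = 0) ->
  trel (\sum_k tgen (eps k, \sum_t c t k *: nu t)).
Proof.
move=> c0; apply/teqv0; apply: teqv_trans (tgen_sum_balance _ _ _ _ _) _.
apply: teqv_sum0 => t _; rewrite (cls_sum_delta _ (fun k => (c t k : R^c))) c0.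
exact: tgen0l.
Qed.

(* The map A -> M sending v_i to \sum_k x k i mu_k factors through al by Mev,
   and Meq splits the values of the factorization on the generators of B. *)
Lemma defect_image_comb (mu : 'I_p -> M) :
  exists T (c : 'I_T -> 'I_p -> R) (nu : 'I_T -> M),
    (forall t, cls defect_row (\row_k (c t k : R^c)) = 0) /\
    forall i, \sum_k x k i *: mu k = \sum_t (\sum_k x k i * c t k) *: nu t.
Proof.
have gP j : \sum_i prel PA j i *: (\sum_k x k i *: mu k) = 0.
  under eq_bigr do rewrite scaler_sumr.
  rewrite exchange_big /=; apply: big1 => k _.
  transitivity ((\sum_i prel PA j i * x k i) *: mu k); last by rewrite x_ker scale0r.
  by rewrite scaler_suml; apply: eq_bigr => i _; rewrite scalerA.
have [g gE] := pres_lift gP; have [h ghE] := Mev g.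
have hP j : \sum_b prel PB j b *: h (u b) = 0.
  rewrite -[RHS](linear0 h) -(prelP PB j) linear_sum.
  by apply: eq_bigr => b _; rewrite linearZ.
have [T [zz [nu [zz_ker huE]]]] := Meq hP.
have [e eE] := fin_all_exists (fun t => yv_gen (zz_ker t)).
have [c cE] := fin_all_exists (fun t => x_gen (alstar_ker (zz_ker t))).
exists T, c, nu; split=> [t|i].
  apply: (cls_defect_eq0 (e := e t)) => i.
  by rewrite -cE -alstar_comb; apply: eq_bigr => b _; rewrite eE.
rewrite -gE ghE alE linear_sum.
under eq_bigr do rewrite linearZ /= huE scaler_sumr.
rewrite exchange_big /=; apply: eq_bigr => t _; rewrite -cE /alstar scaler_suml.
by apply: eq_bigr => b _; rewrite scalerA.
Qed.

Lemma defect_comb (mu : 'I_p -> M) :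
  exists T (c : 'I_T -> 'I_p -> R) (nu : 'I_T -> M),
    (forall t, cls defect_row (\row_k (c t k : R^c)) = 0) /\
    forall k, mu k = \sum_t c t k *: nu t.
Proof.
have [T1 [c1 [nu1 [c1_0 muE]]]] := defect_image_comb mu.
pose mu' k := mu k - \sum_t c1 t k *: nu1 t.
have mu'P i : \sum_k x k i *: mu' k = 0.
  rewrite /mu'; under eq_bigr do rewrite scalerBr.
  rewrite sumrB muE; apply/eqP; rewrite subr_eq0; apply/eqP.
  under [RHS]eq_bigr do rewrite scaler_sumr.
  rewrite exchange_big /=; apply: eq_bigr => t _; rewrite scaler_suml.
  by apply: eq_bigr => k _; rewrite scalerA.
have [T2 [c2 [nu2 [c2_ker mu'E]]]] := Meq mu'P.
pose c t := match split t with inl t1 => c1 t1 | inr t2 => c2 t2 end.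
pose nu t := match split t with inl t1 => nu1 t1 | inr t2 => nu2 t2 end.
exists (T1 + T2)%N, c, nu; split=> [t|k].
  rewrite /c; case: split => [t1|t2]; first exact: c1_0.
  apply: (cls_defect_eq0 (e := fun=> 0)) => i.
  by rewrite (c2_ker t2 i) big1 // => l _; rewrite mulr0.
rewrite big_split_ord /= /c /nu.
under eq_bigr do rewrite split_lshift.
under [X in _ + X]eq_bigr do rewrite split_rshift.
by rewrite -mu'E /mu' addrC subrK.
Qed.

Lemma defect_tensor_trivial (xi : D) (m : M) : trel (tgen (xi, m)).
Proof.
have [T [c [nu [c0 muE]]]] := defect_comb (fun k => (sval xi 0 k : R) *: m).
apply: trel_teqv (trel_defect_comb nu c0).
have -> : xi = \sum_k sval xi 0 k *: eps k.
  by rewrite cls_sum_delta -[LHS]clsK; congr cls; apply/rowP => k; rewrite mxE.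
apply: teqv_trans (tgen_suml _ _ _) _; apply: teqv_sum => k _.
by apply: teqv_trans (tgen_bal _ _ _) _; rewrite muE; apply: teqv_refl.
Qed.

Hypothesis Mfaith : fp_faithful M.

Lemma defect_covdefect_zero (phi : {linear A -> R^o}) :
  exists h : {linear B -> R^o}, forall a, phi a = h (al a).
Proof.
have [c phiE] : exists c : 'I_p -> R, forall i, phi (v i) = \sum_k x k i * c k.
  apply: x_gen => j; rewrite -[RHS](linear0 phi) -(prelP PA j) linear_sum.
  by apply: eq_bigr => i _; rewrite linearZ.
have := fp_faithful_tensor_eq0 Mfaith (fin_pres_coker _) defect_tensor_trivial
  (cls defect_row (\row_k (c k : R^c))).
move/cls_eq0 => [e]; rewrite subr0 => cE.
pose zeta t := \sum_q z q t * e q.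
have zeta_ker : rker defect_rel zeta.
  move=> i; under eq_bigr do rewrite mulr_sumr.
  rewrite exchange_big /=; apply: big1 => q _.
  transitivity ((\sum_t defect_rel i t * z q t) * e q); last by rewrite z_ker mul0r.
  by rewrite mulr_suml; apply: eq_bigr => t _; rewrite mulrA.
have cz k : c k = zeta (lshift pB k).
  have := congr1 (fun r : 'rV[R^c]_p => r 0 k) cE; rewrite mxE summxE => ->.
  by apply: eq_bigr => q _; rewrite !mxE.
apply: (alstar_factor (psi := fun b => \sum_l yv l b * zeta (rshift p l))).
  move=> j; under eq_bigr do rewrite mulr_sumr.
  rewrite exchange_big /=; apply: big1 => l _.
  transitivity ((\sum_b prel PB j b * yv l b) * zeta (rshift p l)).
    by rewrite mulr_suml; apply: eq_bigr => b _; rewrite mulrA.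
  by rewrite yv_ker mul0r.
move=> i; rewrite alstar_comb phiE -(rker_defect_rel zeta).1 //.
by apply: eq_bigr => k _; rewrite cz.
Qed.
End CovariantDefect.

Lemma fp_faithfully_flat_covdefect_zero (R : pzRingType) (M : lmodType R) :
  right_coherent R -> flat M -> fp_faithful M ->
  forall G : fpfunctor R, ev_zero G M -> covdefect_zero G.
Proof.
move=> hR Mflat Mfaith [A B Afp Bfp al] Mev phi /=.
have [PA] := fin_presP Afp; have [PB] := fin_presP Bfp.
have [acoef alE] := fin_all_exists (fun i => pgen_span PB (al (pgen PA i))).
have [p [x [x_ker x_gen]]] := coherent_fg_rker hR (prel PA).
have [pB [yv [yv_ker yv_gen]]] := coherent_fg_rker hR (prel PB).
have [Q [z [z_ker z_gen]]] := coherent_fg_rker hR (defect_rel acoef x yv).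
exact: (defect_covdefect_zero alE x_ker x_gen yv_ker yv_gen z_ker z_gen
  (flat_equational_criterion hR Mflat) Mev Mfaith).
Qed.

Theorem mainTheorem12 (R : pzRingType) (hR : right_coherent R) (M : lmodType R) :
  ((forall G : fpfunctor R, covdefect_zero G -> ev_zero G M) <-> flat M) /\
  ((forall G : fpfunctor R, covdefect_zero G <-> ev_zero G M)
     <-> fp_faithfully_flat M).
Proof.
have part1 : (forall G : fpfunctor R, covdefect_zero G -> ev_zero G M) <-> flat M.
  split=> [covM | Mflat].
    exact/equational_criterion_flat/ev_zero_equational_criterion.
  exact/equational_criterion_ev_zero/flat_equational_criterion.
split=> //; split=> [covM | [Mflat Mfaith] G].
  have Mflat : flat M by apply/part1 => G /covM.
  by split=> //; apply: ev_zero_covdefect_fp_faithful hR Mflat _ => G /covM.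
split; first exact: (part1.2 Mflat).
exact: fp_faithfully_flat_covdefect_zero.
Qed.
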